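(* Let $a_2^{+1},a_2^{-1},a_4^{+1},a_4^{+5},b_4^{-1},b_4^{-5}$ be non-negative integers and let $q=a_2^{+1}\omega_2^{+1}\oplus a_2^{-1}\omega_2^{-1}\oplus a_4^{+1}\omega_4^{+1}\oplus a_4^{+5}\omega_4^{+5}\oplus b_4^{-1}\omega_4^{-1}\oplus b_4^{-5}\omega_4^{-5}$ (where $a\,\omega$ denotes the orthogonal direct sum of $a$ copies of $\omega$), a finite quadratic form on $\mathscr{D}=(\mathbb{Z}/2)^{a_2^{+1}+a_2^{-1}}\oplus(\mathbb{Z}/4)^{a_4^{+1}+a_4^{+5}+b_4^{-1}+b_4^{-5}}$. Then $q$ is $\mathsf{T}$-symmetric if and only if $a_2^{+1}-a_2^{-1}+a_4^{+1}+a_4^{+5}-b_4^{-1}-b_4^{-5}\equiv 0 \pmod 4.$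
   Context: A finite quadratic form $(\mathscr{D},q)$ is a finite abelian group $\mathscr{D}$ with a map $q:\mathscr{D}\to\mathbb{Q}/\mathbb{Z}$ such that $q(nx)=n^2q(x)$ for all $n\in\mathbb{Z}$, $x\in\mathscr{D}$, and $b(x,y)=q(x+y)-q(x)-q(y)$ is a non-degenerate symmetric bilinear form. It is $\mathsf{T}$-symmetric if there is a group automorphism $\gamma$ of $\mathscr{D}$ with $q\circ\gamma=-q$. The forms used are: $\omega_2^{\pm1}$ on $\mathbb{Z}/2$ with $q(x)=\pm x^2/4$; $\omega_4^{\pm1}$ on $\mathbb{Z}/4$ with $q(x)=\pm x^2/8$; $\omega_4^{\pm5}$ on $\mathbb{Z}/4$ with $q(x)=\pm 5x^2/8$. *)

From HB Require Import structures.
From mathcomp Require Import all_boot all_order all_algebra.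
Set Implicit Arguments. Unset Strict Implicit. Unset Printing Implicit Defensive.
Import Order.TTheory GRing.Theory Num.Theory.
Local Open Scope ring_scope.

(* Q/Z-valued forms are represented by rational-valued functions, compared
   modulo Z: r = s in Q/Z  iff  r - s is an integer. *)
Definition eqQZ (r s : rat) : bool := (r - s) \is a Num.int.

Definition T_symmetric (G : zmodType) (q : G -> rat) : Prop :=
  exists gamma : G -> G,
    [/\ (forall x y, gamma (x + y) = gamma x + gamma y),
        bijective gamma &
        forall x, eqQZ (q (gamma x)) (- q x)].

Definition Dgrp (m n : nat) : zmodType :=
  ({ffun 'I_m -> 'Z_2} * {ffun 'I_n -> 'Z_4})%type.

(* coefficient of the i-th Z/2 summand: first a2p copies of omega_2^{+1},
   then copies of omega_2^{-1}:  q(x) = coef * x^2 / 4 *)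
Definition coef2 (a2p i : nat) : rat := if (i < a2p)%N then 1 else -1.

(* coefficient of the j-th Z/4 summand: a4p copies of omega_4^{+1},
   a4p5 copies of omega_4^{+5}, b4m copies of omega_4^{-1}, then copies of
   omega_4^{-5}:  q(x) = coef * x^2 / 8 *)
Definition coef4 (a4p a4p5 b4m j : nat) : rat :=
  if (j < a4p)%N then 1
  else if (j < a4p + a4p5)%N then 5
  else if (j < a4p + a4p5 + b4m)%N then -1
  else -5.

Definition qform (a2p a2m a4p a4p5 b4m b4m5 : nat)
  (x : Dgrp (a2p + a2m) (a4p + a4p5 + b4m + b4m5)) : rat :=
  \sum_(i < a2p + a2m) coef2 a2p i * ((x.1 i : nat)%:R ^+ 2) / 4
  + \sum_(j < a4p + a4p5 + b4m + b4m5)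
      coef4 a4p a4p5 b4m j * ((x.2 j : nat)%:R ^+ 2) / 8.

From mathcomp Require Import all_boot all_order all_algebra.
From mathcomp Require Import algC cyclotomic zify ring.
Import GRing.Theory Num.Theory.
Local Open Scope ring_scope.
Unset Printing Implicit Defensive.

(* q is isometric to the orthogonal sum of its cyclic summands, so
   everything reduces to diagonal forms, i.e. lists of summands c x^2/4 on Z/2
   and c x^2/8 on Z/4 with c odd.

   If: call a summand positive if c = 1 (mod 4) and negative otherwise.  A
   positive and a negative summand always form a T-symmetric block, and so do
   any four summands of the same sign; for these finitely many blocks an
   explicit automorphism gamma with q o gamma = -q is given by a matrix and
   checked by computation.  When the signed count of summands is 0 mod 4, the
   summands split into such blocks.

   Only if: an automorphism with q o gamma = -q permutes D and turns 8q into
   7 * 8q mod 8, so the Gauss sum G(w) = sum_x w^(8 q(x)) at a primitive 8th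
   root of unity w satisfies G(w^7) = G(w).  But G is the product of the
   nonzero Gauss sums of the summands, and G(w^7) = w^(6 * sum c) G(w); hence
   sum c = 0 (mod 4), which is the stated congruence. *)

Lemma eqQZ_refl r : eqQZ r r.
Proof. by rewrite /eqQZ subrr int_num0. Qed.

Lemma eqQZ_sym r s : eqQZ r s -> eqQZ s r.
Proof. by rewrite /eqQZ -opprB rpredN. Qed.

Lemma eqQZ_trans r s t : eqQZ r s -> eqQZ s t -> eqQZ r t.
Proof. by rewrite /eqQZ => h1 h2; rewrite -(subrKA s) rpredD. Qed.

Lemma eqQZ_add r1 s1 r2 s2 : eqQZ r1 s1 -> eqQZ r2 s2 -> eqQZ (r1 + r2) (s1 + s2).
Proof. by rewrite /eqQZ opprD addrACA; apply: rpredD. Qed.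

Lemma eqQZ_opp r s : eqQZ r s -> eqQZ (- r) (- s).
Proof. by rewrite /eqQZ -opprD rpredN. Qed.

Lemma eqQZ_sum {I : finType} (F G : I -> rat) :
  (forall i, eqQZ (F i) (G i)) -> eqQZ (\sum_i F i) (\sum_i G i).
Proof. by move=> FG; elim/big_rec2: _ => [|i r s _]; [apply: eqQZ_refl | apply: eqQZ_add]. Qed.

Lemma eqQZ_addn r s (n : nat) : r = s + n%:R -> eqQZ r s.
Proof. by rewrite /eqQZ => ->; rewrite addrAC subrr add0r natr_int. Qed.

Lemma eqQZ_opp8P (n1 n2 : nat) :
  reflect (eqQZ (n1%:R / 8) (- (n2%:R / 8))) (8 %| n1 + n2)%N.
Proof.
have e (k : int) : n1%:R / 8 - - (n2%:R / 8) = k%:~R :> rat <-> (n1 + n2)%:Z = k * 8.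
  rewrite opprK -mulrDl -natrD; split => [h | h].
    by apply: (@intr_inj rat); rewrite intrM -h divfK.
  by rewrite -[(n1 + n2)%:R]/((n1 + n2)%:Z%:~R : rat) h intrM mulfK.
apply: (iffP idP) => [/dvdnP[k hk] | /intrP[k /e]]; last by lia.
by apply/intrP; exists k%:Z; apply/e; rewrite hk.
Qed.

(** * Quadratic forms up to isometry *)

Record qspace := QSpace { qcar : zmodType; qval : qcar -> rat }.
Arguments QSpace {qcar}.
Arguments qval : clear implicits.

Definition additive {A B : zmodType} (f : A -> B) := forall x y, f (x + y) = f x + f y.

Definition isometric (F G : qspace) : Prop :=
  exists f : qcar F -> qcar G,
    [/\ additive f, bijective f & forall x, eqQZ (qval G (f x)) (qval F x)].

Definition osum (F G : qspace) : qspace :=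
  @QSpace (qcar F * qcar G)%type (fun x => qval F x.1 + qval G x.2).

Lemma isometric_refl F : isometric F F.
Proof. by exists id; split=> // [|x]; [exists id | apply: eqQZ_refl]. Qed.

Lemma isometric_sym {F G} : isometric F G -> isometric G F.
Proof.
case=> f [fD [g fK gK] fq]; exists g; split=> [x y | | y].
- by apply: (can_inj fK); rewrite fD !gK.
- by exists f.
- by apply: eqQZ_sym; rewrite -{1}(gK y).
Qed.

Lemma isometric_trans {F G H} : isometric F G -> isometric G H -> isometric F H.
Proof.
case=> f [fD fB fq] [g [gD gB gq]]; exists (g \o f); split=> [x y /= | | x /=].
- by rewrite fD gD.
- exact: bij_comp.
- exact: eqQZ_trans (gq _) (fq _).
Qed.

Lemma isometric_pointwise {T : zmodType} (q1 q2 : T -> rat) :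
  (forall x, eqQZ (q2 x) (q1 x)) -> isometric (QSpace q1) (QSpace q2).
Proof. by exists id; split=> //; exists id. Qed.

Lemma bijective_pair {A B C D : Type} (f : A -> C) (g : B -> D) :
  bijective f -> bijective g -> bijective (fun x : A * B => (f x.1, g x.2)).
Proof.
case=> f' fK f'K [g' gK g'K]; exists (fun y => (f' y.1, g' y.2)).
- by case=> a b /=; rewrite fK gK.
- by case=> c d /=; rewrite f'K g'K.
Qed.

Lemma osum_congr {F F' G G'} :
  isometric F F' -> isometric G G' -> isometric (osum F G) (osum F' G').
Proof.
case=> f [fD fB fq] [g [gD gB gq]]; exists (fun x => (f x.1, g x.2)); split.
- by move=> [a b] [c d] /=; rewrite fD gD.
- exact: bijective_pair.
- by move=> x /=; apply: eqQZ_add.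
Qed.

Lemma osumC F G : isometric (osum F G) (osum G F).
Proof.
exists (fun x => (x.2, x.1)); split=> [[a b] [c d] // | | [a b]].
- by exists (fun x => (x.2, x.1)); case.
- by rewrite /= addrC; apply: eqQZ_refl.
Qed.

Lemma osumA F G H : isometric (osum F (osum G H)) (osum (osum F G) H).
Proof.
exists (fun x => ((x.1, x.2.1), x.2.2)); split=> [[a [b c]] [d [e f]] // | | [a [b c]]].
- by exists (fun x => (x.1.1, (x.1.2, x.2))); [case=> a [] | case=> [[]]].
- by rewrite /= addrA; apply: eqQZ_refl.
Qed.

Lemma T_symmetric_isometric {F G} :
  isometric F G -> T_symmetric (qval F) -> T_symmetric (qval G).
Proof.
case=> f [fD [f' fK f'K] fq] [g [gD gB gq]].
have f'D : additive f' by move=> x y; apply: (can_inj fK); rewrite fD !f'K.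
exists (f \o g \o f'); split=> [x y /= | | y /=].
- by rewrite f'D gD fD.
- by apply: bij_comp; [apply: bij_comp | exists f] => //; exists f'.
- apply: eqQZ_trans (fq _) _; apply: eqQZ_trans (gq _) _.
  by apply/eqQZ_opp/eqQZ_sym; rewrite -{1}(f'K y).
Qed.

Lemma T_symmetric_osum {F G} :
  T_symmetric (qval F) -> T_symmetric (qval G) -> T_symmetric (qval (osum F G)).
Proof.
case=> f [fD fB fq] [g [gD gB gq]]; exists (fun x => (f x.1, g x.2)); split.
- by move=> [a b] [c d] /=; rewrite fD gD.
- exact: bijective_pair.
- by move=> x /=; rewrite opprD; apply: eqQZ_add.
Qed.

(** * Diagonal forms *)

(* [(false, c)] is x |-> c x^2/4 on Z/2 and [(true, c)] is x |-> c x^2/8 on Z/4;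
   [atom_val8] is the natural number 8q. *)
Definition atom := (bool * nat)%type.

Definition atom_order (a : atom) : nat := if a.1 then 4 else 2.

Definition atom_val8 (a : atom) (x : nat) : nat := ((if a.1 then a.2 else 2 * a.2) * x * x)%N.

Definition atom_space (a : atom) : qspace :=
  if a.1 then @QSpace 'Z_4 (fun x => (atom_val8 a x)%:R / 8)
  else @QSpace 'Z_2 (fun x => (atom_val8 a x)%:R / 8).

Definition unit_space : qspace := @QSpace {ffun 'I_0 -> 'Z_2} (fun _ => 0).

Fixpoint diag_space (l : seq atom) : qspace :=
  if l is a :: l' then osum (atom_space a) (diag_space l') else unit_space.

Definition atom_coord (a : atom) : qcar (atom_space a) -> nat :=
  match a as a return qcar (atom_space a) -> nat with
  | (true, c) => fun x : 'Z_4 => nat_of_ord x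
  | (false, c) => fun x : 'Z_2 => nat_of_ord x
  end.

Definition atom_of_coord (a : atom) : nat -> qcar (atom_space a) :=
  match a as a return nat -> qcar (atom_space a) with
  | (true, c) => fun n => (inZp n : 'Z_4)
  | (false, c) => fun n => (inZp n : 'Z_2)
  end.

Fixpoint coords (l : seq atom) : qcar (diag_space l) -> seq nat :=
  match l as l return qcar (diag_space l) -> seq nat with
  | [::] => fun _ => [::]
  | a :: l' => fun x => atom_coord a x.1 :: coords l' x.2
  end.

Fixpoint of_coords (l : seq atom) : seq nat -> qcar (diag_space l) :=
  match l as l return seq nat -> qcar (diag_space l) with
  | [::] => fun _ => 0
  | a :: l' => fun s => (atom_of_coord a (head 0%N s), of_coords l' (behead s))
  end.

Fixpoint coord_range (ms : seq nat) : seq (seq nat) :=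
  if ms is m :: ms' then [seq x :: s | x <- iota 0 m, s <- coord_range ms'] else [:: [::]].

Fixpoint coord_add (ms s t : seq nat) : seq nat :=
  match ms, s, t with
  | m :: ms', x :: s', y :: t' => ((x + y) %% m)%N :: coord_add ms' s' t'
  | _, _, _ => [::]
  end.

Fixpoint val8 (l : seq atom) (s : seq nat) : nat :=
  match l, s with
  | a :: l', x :: s' => (atom_val8 a x + val8 l' s')%N
  | _, _ => 0%N
  end.

Lemma coord_range_cons m ms x s :
  (x :: s \in coord_range (m :: ms)) = (x < m)%N && (s \in coord_range ms).
Proof.
apply/allpairsP/andP => [[[y t] /= [hy ht [-> ->]]] | [hx hs]].
  by rewrite mem_iota in hy.
by exists (x, s); rewrite mem_iota.
Qed.

Lemma coord_range_nil m ms : ([::] \in coord_range (m :: ms)) = false.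
Proof. by apply/allpairsP => -[[y t]] []. Qed.

Lemma coord_range_uniq ms : uniq (coord_range ms).
Proof.
elim: ms => [|m ms IH] //=.
by rewrite allpairs_uniq ?iota_uniq // => -[x s] [y t] _ _ [-> ->].
Qed.

Lemma size_coord_range ms s : s \in coord_range ms -> size s = size ms.
Proof.
elim: ms s => [|m ms IH] [|x s] //=; rewrite ?coord_range_nil ?coord_range_cons //.
by case/andP=> _ /IH ->.
Qed.

Lemma atom_coord_lt a x : (atom_coord a x < atom_order a)%N.
Proof. by case: a x => [[]] c x /=. Qed.

Lemma atom_coordK a n : (n < atom_order a)%N -> atom_coord a (atom_of_coord a n) = n.
Proof. by case: a => [[]] c /= h; rewrite modn_small. Qed.

Lemma atom_of_coordK a x : atom_of_coord a (atom_coord a x) = x.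
Proof. by case: a x => [[]] c x; apply: val_inj; rewrite /= modn_small. Qed.

Lemma coords_in l x : coords l x \in coord_range (map atom_order l).
Proof.
elim: l x => [|a l IH] x /=; first by rewrite inE.
by rewrite coord_range_cons atom_coord_lt IH.
Qed.

Lemma of_coordsK l s : s \in coord_range (map atom_order l) -> coords l (of_coords l s) = s.
Proof.
elim: l s => [|a l IH] [|x s] //=; rewrite ?coord_range_nil ?coord_range_cons //.
by case/andP=> hx hs; rewrite atom_coordK // IH.
Qed.

Lemma coordsK l : cancel (coords l) (of_coords l).
Proof.
elim: l => [|a l IH] x /=; first by apply/ffunP => -[].
by case: x => x1 x2 /=; rewrite atom_of_coordK IH.
Qed.

Lemma coords_add l x y :
  coords l (x + y) = coord_add (map atom_order l) (coords l x) (coords l y).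
Proof.
elim: l x y => [|a l IH] // [x1 x2] [y1 y2] /=.
by rewrite -IH; case: a x1 y1 => [[]].
Qed.

Lemma qval_diag l x : qval (diag_space l) x = (val8 l (coords l x))%:R / 8.
Proof.
elim: l x => [|a l IH] x; first by rewrite /= mul0r.
by case: x => x1 x2 /=; rewrite IH natrD mulrDl; case: a x1 => [[]].
Qed.

Lemma osum_unit F : isometric F (osum unit_space F).
Proof.
exists (fun x => (0, x)); split=> [x y | | x /=].
- by rewrite -[X in (X, _)](addr0 0).
- by exists snd => // -[u x]; congr (_, _); apply/ffunP => -[].
- by rewrite add0r; apply: eqQZ_refl.
Qed.

Lemma diag_space_cat l1 l2 :
  isometric (diag_space (l1 ++ l2)) (osum (diag_space l1) (diag_space l2)).
Proof.
elim: l1 => [|a l1 IH] /=; first exact: osum_unit.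
exact: isometric_trans (osum_congr (isometric_refl _) IH) (osumA _ _ _).
Qed.

Lemma osumCA F G H : isometric (osum F (osum G H)) (osum G (osum F H)).
Proof.
apply: isometric_trans (osumA _ _ _) _.
apply: isometric_trans (isometric_sym (osumA _ _ _)).
exact: osum_congr (osumC _ _) (isometric_refl _).
Qed.

Lemma diag_space_perm l l' : perm_eq l l' -> isometric (diag_space l) (diag_space l').
Proof.
elim: l l' => [|a l IH] l' hl.
  by move: hl; rewrite perm_sym => /perm_nilP ->; apply: isometric_refl.
have ha : a \in l' by rewrite -(perm_mem hl) mem_head.
move: hl; case/splitPr: ha => l1 l2 hl.
have /IH {}hl : perm_eq l (l1 ++ l2).
  by rewrite -(perm_cons a) (perm_trans hl) // -[a :: l2]cat1s perm_catCA.
apply: isometric_trans (osum_congr (isometric_refl _) hl) _.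
elim: l1 {hl} => [|b l1 IH'] /=; first exact: isometric_refl.
exact: isometric_trans (osumCA _ _ _) (osum_congr (isometric_refl _) IH').
Qed.

Lemma T_symmetric_diag_cat l1 l2 :
  T_symmetric (qval (diag_space l1)) -> T_symmetric (qval (diag_space l2)) ->
  T_symmetric (qval (diag_space (l1 ++ l2))).
Proof.
move=> h1 h2.
exact: T_symmetric_isometric (isometric_sym (diag_space_cat _ _)) (T_symmetric_osum h1 h2).
Qed.

(** * Explicit anti-isometries *)

Definition row_dot (r s : seq nat) : nat := sumn [seq (p.1 * p.2)%N | p <- zip r s].

Definition mx_map (ms : seq nat) (M : seq (seq nat)) (s : seq nat) : seq nat :=
  [seq (row_dot rm.1 s %% rm.2)%N | rm <- zip M ms].

Lemma row_dot_add m r ns s t :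
  all2 (fun a n => m %| a * n)%N r ns -> size s = size ns -> size t = size ns ->
  row_dot r (coord_add ns s t) = row_dot r s + row_dot r t %[mod m].
Proof.
elim: ns r s t => [|n ns IH] [|a r] [|x s] [|y t] //= /andP[/dvdnP[k hk] hr] [hs] [ht].
rewrite /row_dot /= -!/(row_dot _ _) -modnDm IH // modnDm.
have e : (a * x + row_dot r s + (a * y + row_dot r t) =
    k * ((x + y) %/ n) * m + (a * ((x + y) %% n) + (row_dot r s + row_dot r t)))%N.
  have := divn_eq (x + y) n; nia.
by rewrite e modnMDl.
Qed.

Lemma mx_map_add ms ns M s t :
  all2 (fun r m => all2 (fun a n => m %| a * n)%N r ns) M ms ->
  size s = size ns -> size t = size ns ->
  mx_map ms M (coord_add ns s t) = coord_add ms (mx_map ms M s) (mx_map ms M t).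
Proof.
elim: M ms => [|r M IH] [|m ms] //= /andP[hr hM] hs ht.
by rewrite /mx_map /= -!/(mx_map _ _ _) IH // modnDm row_dot_add.
Qed.

(* Row i of M maps s to sum_j M_ij s_j mod m_i; the divisibility m_i | M_ij m_j
   makes this a homomorphism. *)
Definition anti_cert (l : seq atom) (M M' : seq (seq nat)) : bool :=
  let ms := map atom_order l in
  let F := mx_map ms M in
  let F' := mx_map ms M' in
  [&& all2 (fun r m => all2 (fun a n => m %| a * n)%N r ms) M ms,
      all (fun s => [&& F s \in coord_range ms, F' (F s) == s &
                        8 %| val8 l (F s) + val8 l s]%N) (coord_range ms) &
      all (fun t => (F' t \in coord_range ms) && (F (F' t) == t)) (coord_range ms)].

Lemma T_symmetric_of_cert l M M' :
  anti_cert l M M' -> T_symmetric (qval (diag_space l)).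
Proof.
case/and3P=> hM /allP hF /allP hF'.
set ms := map atom_order l in hM hF hF'.
pose g x := of_coords l (mx_map ms M (coords l x)).
pose g' y := of_coords l (mx_map ms M' (coords l y)).
have hFx x := and3P (hF _ (coords_in l x)).
have coords_g x : coords l (g x) = mx_map ms M (coords l x).
  by case: (hFx x) => hin _ _; rewrite of_coordsK.
exists g; split.
- move=> x y; apply: (can_inj (coordsK l)).
  rewrite coords_add !coords_g coords_add mx_map_add //;
    exact: size_coord_range (coords_in l _).
- exists g' => [x | y].
    by case: (hFx x) => _ /eqP hK _; rewrite /g' coords_g hK coordsK.
  case/andP: (hF' _ (coords_in l y)) => hin /eqP hK.
  by rewrite /g /g' of_coordsK // hK coordsK.
- move=> x; rewrite !qval_diag coords_g; apply/eqQZ_opp8P.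
  by case: (hFx x).
Qed.

(* The six summands of the theorem, negative coefficients taken mod 4 resp. 8. *)
Definition om2_1 : atom := (false, 1%N).
Definition om2_m1 : atom := (false, 3%N).
Definition om4_1 : atom := (true, 1%N).
Definition om4_5 : atom := (true, 5%N).
Definition om4_m1 : atom := (true, 7%N).
Definition om4_m5 : atom := (true, 3%N).

Definition pos_atoms : seq atom := [:: om2_1; om4_1; om4_5].
Definition neg_atoms : seq atom := [:: om2_m1; om4_m1; om4_m5].

Definition atom_opp (a : atom) : atom := (a.1, (if a.1 then 8 else 4) - a.2)%N.

Definition pair_certs : seq (seq atom * (seq (seq nat) * seq (seq nat))) := [::
  ([:: om2_1; om2_m1],
    ([:: [:: 0; 1]; [:: 1; 0]],
     [:: [:: 0; 1]; [:: 1; 0]]));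
  ([:: om2_1; om4_m1],
    ([:: [:: 1; 1]; [:: 2; 1]],
     [:: [:: 1; 1]; [:: 2; 3]]));
  ([:: om2_1; om4_m5],
    ([:: [:: 1; 1]; [:: 2; 1]],
     [:: [:: 1; 1]; [:: 2; 3]]));
  ([:: om2_m1; om4_1],
    ([:: [:: 1; 1]; [:: 2; 1]],
     [:: [:: 1; 1]; [:: 2; 3]]));
  ([:: om4_1; om4_m1],
    ([:: [:: 0; 1]; [:: 1; 0]],
     [:: [:: 0; 1]; [:: 1; 0]]));
  ([:: om4_1; om4_m5],
    ([:: [:: 2; 1]; [:: 1; 2]],
     [:: [:: 2; 1]; [:: 1; 2]]));
  ([:: om2_m1; om4_5],
    ([:: [:: 1; 1]; [:: 2; 1]],
     [:: [:: 1; 1]; [:: 2; 3]]));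
  ([:: om4_5; om4_m1],
    ([:: [:: 2; 1]; [:: 1; 2]],
     [:: [:: 2; 1]; [:: 1; 2]]));
  ([:: om4_5; om4_m5],
    ([:: [:: 0; 1]; [:: 1; 0]],
     [:: [:: 0; 1]; [:: 1; 0]]))]%N.

Definition pos_quad_certs : seq (seq atom * (seq (seq nat) * seq (seq nat))) := [::
  ([:: om4_5; om4_5; om4_5; om4_5],
    ([:: [:: 1; 1; 1; 2]; [:: 1; 2; 3; 1]; [:: 1; 3; 2; 3]; [:: 2; 1; 3; 3]],
     [:: [:: 3; 3; 3; 2]; [:: 3; 2; 1; 3]; [:: 3; 1; 2; 1]; [:: 2; 3; 1; 1]]));
  ([:: om4_1; om4_5; om4_5; om4_5],
    ([:: [:: 0; 1; 1; 1]; [:: 1; 0; 1; 3]; [:: 1; 1; 3; 0]; [:: 1; 3; 0; 1]],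
     [:: [:: 0; 3; 3; 3]; [:: 3; 0; 3; 1]; [:: 3; 3; 1; 0]; [:: 3; 1; 0; 3]]));
  ([:: om4_1; om4_1; om4_5; om4_5],
    ([:: [:: 1; 1; 0; 1]; [:: 1; 2; 1; 1]; [:: 0; 1; 3; 3]; [:: 1; 1; 3; 2]],
     [:: [:: 3; 3; 0; 3]; [:: 3; 2; 3; 3]; [:: 0; 3; 1; 1]; [:: 3; 3; 1; 2]]));
  ([:: om4_1; om4_1; om4_1; om4_5],
    ([:: [:: 0; 1; 1; 1]; [:: 1; 0; 1; 3]; [:: 1; 1; 1; 2]; [:: 1; 3; 2; 3]],
     [:: [:: 0; 3; 3; 3]; [:: 3; 0; 3; 1]; [:: 3; 3; 3; 2]; [:: 3; 1; 2; 1]]));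
  ([:: om4_1; om4_1; om4_1; om4_1],
    ([:: [:: 1; 1; 1; 2]; [:: 1; 2; 3; 1]; [:: 1; 3; 2; 3]; [:: 2; 1; 3; 3]],
     [:: [:: 3; 3; 3; 2]; [:: 3; 2; 1; 3]; [:: 3; 1; 2; 1]; [:: 2; 3; 1; 1]]));
  ([:: om2_1; om4_5; om4_5; om4_5],
    ([:: [:: 1; 1; 1; 1]; [:: 2; 0; 1; 2]; [:: 2; 1; 2; 0]; [:: 2; 2; 0; 1]],
     [:: [:: 1; 1; 1; 1]; [:: 2; 0; 3; 2]; [:: 2; 3; 2; 0]; [:: 2; 2; 0; 3]]));
  ([:: om2_1; om4_1; om4_5; om4_5],
    ([:: [:: 1; 1; 1; 1]; [:: 2; 0; 0; 1]; [:: 2; 0; 1; 2]; [:: 2; 1; 2; 2]],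
     [:: [:: 1; 1; 1; 1]; [:: 2; 0; 0; 3]; [:: 2; 0; 3; 2]; [:: 2; 3; 2; 2]]));
  ([:: om2_1; om4_1; om4_1; om4_5],
    ([:: [:: 1; 1; 1; 1]; [:: 2; 0; 0; 1]; [:: 2; 0; 1; 2]; [:: 2; 1; 2; 2]],
     [:: [:: 1; 1; 1; 1]; [:: 2; 0; 0; 3]; [:: 2; 0; 3; 2]; [:: 2; 3; 2; 2]]));
  ([:: om2_1; om4_1; om4_1; om4_1],
    ([:: [:: 1; 1; 1; 1]; [:: 2; 0; 1; 2]; [:: 2; 1; 2; 0]; [:: 2; 2; 0; 1]],
     [:: [:: 1; 1; 1; 1]; [:: 2; 0; 3; 2]; [:: 2; 3; 2; 0]; [:: 2; 2; 0; 3]]));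
  ([:: om2_1; om2_1; om4_5; om4_5],
    ([:: [:: 0; 1; 0; 1]; [:: 1; 0; 1; 0]; [:: 0; 2; 2; 1]; [:: 2; 0; 1; 2]],
     [:: [:: 0; 1; 0; 1]; [:: 1; 0; 1; 0]; [:: 0; 2; 2; 3]; [:: 2; 0; 3; 2]]));
  ([:: om2_1; om2_1; om4_1; om4_5],
    ([:: [:: 0; 1; 0; 1]; [:: 1; 0; 1; 0]; [:: 0; 2; 0; 1]; [:: 2; 0; 1; 0]],
     [:: [:: 0; 1; 0; 1]; [:: 1; 0; 1; 0]; [:: 0; 2; 0; 3]; [:: 2; 0; 3; 0]]));
  ([:: om2_1; om2_1; om4_1; om4_1],
    ([:: [:: 0; 1; 0; 1]; [:: 1; 0; 1; 0]; [:: 0; 2; 2; 1]; [:: 2; 0; 1; 2]],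
     [:: [:: 0; 1; 0; 1]; [:: 1; 0; 1; 0]; [:: 0; 2; 2; 3]; [:: 2; 0; 3; 2]]));
  ([:: om2_1; om2_1; om2_1; om4_5],
    ([:: [:: 0; 0; 1; 1]; [:: 0; 1; 0; 1]; [:: 1; 0; 0; 1]; [:: 2; 2; 2; 1]],
     [:: [:: 0; 0; 1; 1]; [:: 0; 1; 0; 1]; [:: 1; 0; 0; 1]; [:: 2; 2; 2; 3]]));
  ([:: om2_1; om2_1; om2_1; om4_1],
    ([:: [:: 0; 0; 1; 1]; [:: 0; 1; 0; 1]; [:: 1; 0; 0; 1]; [:: 2; 2; 2; 1]],
     [:: [:: 0; 0; 1; 1]; [:: 0; 1; 0; 1]; [:: 1; 0; 0; 1]; [:: 2; 2; 2; 3]]));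
  ([:: om2_1; om2_1; om2_1; om2_1],
    ([:: [:: 0; 1; 1; 1]; [:: 1; 0; 1; 1]; [:: 1; 1; 0; 1]; [:: 1; 1; 1; 0]],
     [:: [:: 0; 1; 1; 1]; [:: 1; 0; 1; 1]; [:: 1; 1; 0; 1]; [:: 1; 1; 1; 0]]))]%N.

(* Negating every summand of a block keeps its anti-isometry valid, so the
   negative blocks of four reuse the matrices of the positive ones. *)
Definition certs : seq (seq atom * (seq (seq nat) * seq (seq nat))) :=
  pair_certs ++ pos_quad_certs ++ [seq (map atom_opp c.1, c.2) | c <- pos_quad_certs].

Lemma certs_valid : all (fun c => anti_cert c.1 c.2.1 c.2.2) certs.
Proof. by vm_compute. Qed.

Lemma T_symmetric_perm_cert l :
  has (perm_eq l) (map fst certs) -> T_symmetric (qval (diag_space l)).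
Proof.
case/hasP=> _ /mapP[c hc ->] hl.
apply: T_symmetric_isometric (isometric_sym (diag_space_perm _ _ hl)) _.
exact: T_symmetric_of_cert (allP certs_valid c hc).
Qed.

Lemma pair_keys :
  all (fun x => all (fun y => has (perm_eq [:: x; y]) (map fst certs)) neg_atoms) pos_atoms.
Proof. by []. Qed.

Lemma quad_keys :
  all (fun S => all (fun x1 => all (fun x2 => all (fun x3 => all (fun x4 =>
         has (perm_eq [:: x1; x2; x3; x4]) (map fst certs)) S) S) S) S)
      [:: pos_atoms; neg_atoms].
Proof. by []. Qed.

Lemma T_symmetric_pair x y :
  x \in pos_atoms -> y \in neg_atoms -> T_symmetric (qval (diag_space [:: x; y])).
Proof.
move=> hx hy; apply: T_symmetric_perm_cert.
exact: allP (allP pair_keys x hx) y hy.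
Qed.

Lemma T_symmetric_quad {S} q :
  S \in [:: pos_atoms; neg_atoms] -> size q = 4%N -> all (mem S) q ->
  T_symmetric (qval (diag_space q)).
Proof.
move=> hS; case: q => [|x1 [|x2 [|x3 [|x4 [|]]]]] // _ /and5P[h1 h2 h3 h4 _].
apply: T_symmetric_perm_cert.
by move: (allP quad_keys S hS) => /allP/(_ x1 h1)/allP/(_ x2 h2)/allP/(_ x3 h3)/allP/(_ x4 h4).
Qed.

Lemma T_symmetric_unit : T_symmetric (qval unit_space).
Proof. by exists id; split=> [//||x]; [exists id | rewrite /= oppr0; apply: eqQZ_refl]. Qed.

Lemma T_symmetric_quads {S} p :
  S \in [:: pos_atoms; neg_atoms] -> all (mem S) p -> (4 %| size p)%N ->
  T_symmetric (qval (diag_space p)).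
Proof.
move=> hS + /dvdnP[n]; elim: n p => [|n IH] p hp hsize.
  by move/eqP: hsize; rewrite size_eq0 => /eqP ->; apply: T_symmetric_unit.
rewrite -(cat_take_drop 4 p); apply: T_symmetric_diag_cat.
  apply: (T_symmetric_quad _ hS); first by rewrite size_takel // hsize mulSn leq_addr.
  by apply/allP => x /mem_take /(allP hp).
apply: IH; last by rewrite size_drop hsize; lia.
by apply/allP => x /mem_drop /(allP hp).
Qed.

Lemma T_symmetric_balanced p m :
  all (mem pos_atoms) p -> all (mem neg_atoms) m -> size p = size m %[mod 4] ->
  T_symmetric (qval (diag_space (p ++ m))).
Proof.
elim: p m => [|x p IH] [|y m] hp hm hsize.
- exact: T_symmetric_unit.
- by apply: (T_symmetric_quads (S := neg_atoms)) => //; move: hsize => /=; lia.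
- by rewrite cats0; apply: (T_symmetric_quads (S := pos_atoms)) => //; move: hsize => /=; lia.
case/andP: hp => hx hp; case/andP: hm => hy hm.
have hperm : perm_eq ([:: x; y] ++ p ++ m) (x :: p ++ y :: m).
  by rewrite /= perm_cons perm_sym -[y :: m]cat1s perm_catCA.
apply: T_symmetric_isometric (diag_space_perm _ _ hperm) _.
apply: T_symmetric_diag_cat; first exact: T_symmetric_pair.
by apply: IH => //; move: hsize => /=; lia.
Qed.

(** * Gauss sums *)

Definition gauss {R : nzRingType} (w : R) (l : seq atom) : R :=
  \sum_(s <- coord_range (map atom_order l)) w ^+ val8 l s.

Definition atom_gauss {R : nzRingType} (w : R) (a : atom) : R :=
  \sum_(x <- iota 0 (atom_order a)) w ^+ atom_val8 a x.

Lemma gauss_prod {R : nzRingType} (w : R) l : gauss w l = \prod_(a <- l) atom_gauss w a.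
Proof.
elim: l => [|a l IH]; first by rewrite /gauss big_seq1 big_nil.
rewrite big_cons -IH /gauss /= big_allpairs_dep big_distrl /=.
by apply: eq_bigr => x _; rewrite big_distrr; apply: eq_bigr => s _; apply: exprD.
Qed.

Lemma gauss_T_symmetric {R : nzRingType} (w : R) l :
  w ^+ 8 = 1 -> T_symmetric (qval (diag_space l)) -> gauss (w ^+ 7) l = gauss w l.
Proof.
move=> w8 [g [gD [g' gK g'K] gq]].
set ms := map atom_order l.
pose sigma s := coords l (g (of_coords l s)).
have sigma_val s : s \in coord_range ms -> (8 %| val8 l (sigma s) + val8 l s)%N.
  by move=> hs; apply/eqQZ_opp8P; rewrite /sigma -{2}(of_coordsK l _ hs) -!qval_diag.
have sigma_perm : perm_eq (coord_range ms) (map sigma (coord_range ms)).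
  apply: uniq_perm; first exact: coord_range_uniq.
    rewrite map_inj_in_uniq ?coord_range_uniq // => s t hs ht.
    move/(can_inj (coordsK l))/(can_inj gK) => e.
    by rewrite -(of_coordsK l _ hs) -(of_coordsK l _ ht) e.
  move=> t; apply/idP/mapP => [ht | [s _ ->]]; last exact: coords_in.
  exists (coords l (g' (of_coords l t))); first exact: coords_in.
  by rewrite /sigma coordsK g'K of_coordsK.
rewrite /gauss (perm_big _ sigma_perm) big_map; apply: eq_big_seq => s hs.
rewrite -exprM -(expr_mod _ w8) -[RHS](expr_mod _ w8); congr (_ ^+ _).
by have := sigma_val s hs; lia.
Qed.

Lemma expr8_of_expr4 {R : pzRingType} {w : R} : w ^+ 4 = -1 -> w ^+ 8 = 1.
Proof. by move=> w4; rewrite (exprM w 4 2) w4 sqrrN expr1n. Qed.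

Lemma atom_gauss_Z2 {R : nzRingType} (w : R) c : atom_gauss w (false, c) = 1 + w ^+ (2 * c).
Proof. by rewrite /atom_gauss /= !big_cons big_nil /atom_val8 /= !muln0 !muln1 addr0. Qed.

Lemma atom_gauss_Z4 {R : nzRingType} (w : R) c :
  w ^+ 4 = -1 -> odd c -> atom_gauss w (true, c) = w ^+ c *+ 2.
Proof.
move=> w4 c_odd; rewrite /atom_gauss /= !big_cons big_nil /atom_val8 /= !muln0 !muln1 addr0.
have -> : (c * 2 * 2 = 4 * c)%N by lia.
have -> : (c * 3 * 3 = c + 8 * c)%N by lia.
rewrite exprD !exprM w4 (expr8_of_expr4 w4) expr1n mulr1 -signr_odd c_odd expr1 expr0.
by rewrite addrCA addNKr mulr2n.
Qed.

Lemma atom_gauss_conj {R : comNzRingType} (w : R) a :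
  w ^+ 4 = -1 -> odd a.2 -> atom_gauss (w ^+ 7) a = w ^+ (6 * a.2) * atom_gauss w a.
Proof.
move=> w4; have w7_4 : (w ^+ 7) ^+ 4 = -1 by rewrite -exprM mulnC exprM w4 -signr_odd.
case: a => -[] c /= c_odd.
  rewrite (atom_gauss_Z4 _ _ w7_4) // (atom_gauss_Z4 _ _ w4) // -exprM mulrnAr -exprD.
  by congr (_ ^+ _ *+ 2); lia.
rewrite !atom_gauss_Z2 mulrDr mulr1 -!exprM -exprD addrC.
have -> : (7 * (2 * c) = 6 * c + 8 * c)%N by lia.
have -> : (6 * c + 2 * c = 8 * c)%N by lia.
by rewrite exprD [w ^+ (8 * c)]exprM (expr8_of_expr4 w4) expr1n mulr1.
Qed.

Lemma gauss_conj {R : comNzRingType} (w : R) l :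
  w ^+ 4 = -1 -> all (fun a => odd a.2) l ->
  gauss (w ^+ 7) l = w ^+ (6 * sumn (map snd l)) * gauss w l.
Proof.
move=> w4; rewrite !gauss_prod; elim: l => [|a l IH] /=; first by rewrite !big_nil mulr1.
case/andP=> ha hl; rewrite !big_cons IH // atom_gauss_conj //.
by rewrite mulrACA -exprD mulnDr.
Qed.

Lemma atom_gauss_neq0 {R : idomainType} (w : R) a :
  2%:R != 0 :> R -> w ^+ 4 = -1 -> odd a.2 -> atom_gauss w a != 0.
Proof.
move=> two_neq0 w4; case: a => -[] c /= c_odd.
  rewrite (atom_gauss_Z4 _ _ w4) // -mulr_natr mulf_neq0 // expf_neq0 //.
  by apply: contra_eq_neq w4 => ->; rewrite expr0n eq_sym oppr_eq0 oner_eq0.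
rewrite atom_gauss_Z2; apply: contra_neq two_neq0 => /eqP.
rewrite addr_eq0 => /eqP w2c.
have e1 : w ^+ (4 * c) = 1.
  have -> : (4 * c = 2 * c * 2)%N by lia.
  by rewrite exprM -[w ^+ (2 * c)]opprK -w2c sqrrN expr1n.
have e2 : w ^+ (4 * c) = -1 by rewrite exprM w4 -signr_odd c_odd.
by move/eqP: e2; rewrite e1 -addr_eq0 => /eqP.
Qed.

Lemma T_symmetric_diag_dvd4 l :
  all (fun a => odd a.2) l -> T_symmetric (qval (diag_space l)) -> (4 %| sumn (map snd l))%N.
Proof.
move=> l_odd hT.
have [z z_prim] := C_prim_root_exists (isT : (0 < 8)%N).
have z4 : z ^+ 4 = -1.
  have : (z ^+ 4) ^+ 2 == 1 by rewrite -exprM prim_expr_order.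
  by rewrite sqrf_eq1 -(prim_order_dvd z_prim) => /orP[|/eqP].
have gauss_neq0 : gauss z l != 0.
  rewrite gauss_prod prodf_seq_neq0; apply/allP => a /(allP l_odd) ha.
  by apply: atom_gauss_neq0; rewrite ?pnatr_eq0.
have := gauss_T_symmetric _ _ (expr8_of_expr4 z4) hT.
rewrite gauss_conj // -{2}[gauss z l]mul1r => /(mulIf gauss_neq0)/eqP.
by rewrite -(prim_order_dvd z_prim); lia.
Qed.

Lemma sumn_snd_mod (S : seq atom) k s :
  {in S, forall a, a.2 = k %[mod 4]} -> all (mem S) s -> sumn (map snd s) = k * size s %[mod 4].
Proof.
move=> hS; elim: s => [|a s IH] /=; first by rewrite muln0.
case/andP=> ha hs.
by rewrite mulnS -modnDm (hS a ha) (IH hs) modnDm.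
Qed.

Lemma T_symmetric_diagP l :
  all (mem (pos_atoms ++ neg_atoms)) l ->
  T_symmetric (qval (diag_space l)) <-> (4 %| sumn (map snd l))%N.
Proof.
move=> hl; split.
  apply: T_symmetric_diag_dvd4; apply/allP => a /(allP hl).
  exact: allP (isT : all (fun a => odd a.2) (pos_atoms ++ neg_atoms)) a.
set p := filter (mem pos_atoms) l; set m := filter (predC (mem pos_atoms)) l.
have hperm : perm_eq (p ++ m) l by rewrite perm_filterC.
have hp : all (mem pos_atoms) p by apply: filter_all.
have hm : all (mem neg_atoms) m.
  apply/allP => a; rewrite mem_filter => /andP[a_pos a_l].
  have : a \in pos_atoms ++ neg_atoms := allP hl a a_l.
  by rewrite mem_cat (negbTE a_pos : (a \in pos_atoms) = false).
move=> hsig; apply: T_symmetric_isometric (diag_space_perm _ _ hperm) _.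
apply: T_symmetric_balanced => //.
have hsum := perm_sumn (perm_map snd hperm).
have hsp : sumn (map snd p) = 1 * size p %[mod 4].
  by apply: sumn_snd_mod hp => a; rewrite !inE => /or3P[]/eqP->.
have hsm : sumn (map snd m) = 3 * size m %[mod 4].
  by apply: sumn_snd_mod hm => a; rewrite !inE => /or3P[]/eqP->.
move: hsig; rewrite /dvdn -hsum map_cat sumn_cat -modnDm hsp hsm modnDm.
by move/eqP; lia.
Qed.

(** * The form of the theorem as a diagonal form *)

Lemma ffun_osum {T : zmodType} m (h : nat -> T -> rat) :
  isometric (QSpace (fun x : {ffun 'I_m.+1 -> T} => \sum_(i < m.+1) h i (x i)))
            (osum (QSpace (h 0%N)) (QSpace (fun x : {ffun 'I_m -> T} => \sum_(i < m) h i.+1 (x i)))).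
Proof.
exists (fun x : {ffun 'I_m.+1 -> T} => (x ord0, [ffun i => x (lift ord0 i)])); split.
- move=> x y /=; congr (_, _); first by rewrite ffunE.
  by apply/ffunP => i; rewrite !ffunE.
- exists (fun p : T * {ffun 'I_m -> T} =>
            [ffun i : 'I_m.+1 => if unlift ord0 i is Some j then p.2 j else p.1]).
    move=> x; apply/ffunP => i; rewrite ffunE.
    by case: unliftP => [j ->|->] //=; rewrite ffunE.
  case=> a y /=; congr (_, _); first by rewrite ffunE unlift_none.
  by apply/ffunP => i; rewrite !ffunE liftK.
- move=> x /=; rewrite big_ord_recl; under eq_bigr do rewrite ffunE.
  under [X in eqQZ _ (_ + X)]eq_bigr do rewrite lift0.
  exact: eqQZ_refl.
Qed.

Lemma ffun0_unit {T : zmodType} (q : {ffun 'I_0 -> T} -> rat) :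
  (forall x, q x = 0) -> isometric (QSpace q) unit_space.
Proof.
move=> q0; exists (fun _ => 0); split=> [x y | | x /=].
- by rewrite addr0.
- by exists (fun _ => 0) => x; apply/ffunP => -[].
- by rewrite q0; apply: eqQZ_refl.
Qed.

Lemma mkseqS_cons {T : Type} (f : nat -> T) n : mkseq f n.+1 = f 0%N :: mkseq (fun i => f i.+1) n.
Proof. by rewrite /mkseq /= -[1%N]addn0 iotaDl -map_comp. Qed.

Definition ffun_space (b : bool) m (f : nat -> nat) : qspace :=
  if b then QSpace (fun x : {ffun 'I_m -> 'Z_4} => \sum_(i < m) (atom_val8 (true, f i) (x i))%:R / 8)
  else QSpace (fun x : {ffun 'I_m -> 'Z_2} => \sum_(i < m) (atom_val8 (false, f i) (x i))%:R / 8).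

Lemma ffun_space_diag b m f :
  isometric (ffun_space b m f) (diag_space (mkseq (fun i => (b, f i)) m)).
Proof.
elim: m f => [|m IH] f; first by case: b; apply: ffun0_unit => x; rewrite big_ord0.
rewrite mkseqS_cons /=; case: b IH => IH.
  apply: isometric_trans (ffun_osum m (fun i (t : 'Z_4) => (atom_val8 (true, f i) t)%:R / 8)) _.
  exact: osum_congr (isometric_refl _) (IH _).
apply: isometric_trans (ffun_osum m (fun i (t : 'Z_2) => (atom_val8 (false, f i) t)%:R / 8)) _.
exact: osum_congr (isometric_refl _) (IH _).
Qed.

Lemma map_iota_const {T : Type} (f : nat -> T) x m n :
  (forall i, (m <= i < m + n)%N -> f i = x) -> map f (iota m n) = nseq n x.
Proof.
elim: n m => [|n IH] m hf //=; rewrite hf ?leqnn ?addnS ?ltnS ?leq_addr // IH // => i hi.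
by apply: hf; lia.
Qed.

Definition coef2_nat (a2p i : nat) : nat := if (i < a2p)%N then 1 else 3.

Definition coef4_nat (a4p a4p5 b4m j : nat) : nat :=
  if (j < a4p)%N then 1
  else if (j < a4p + a4p5)%N then 5
  else if (j < a4p + a4p5 + b4m)%N then 7
  else 3.

Definition model (a2p a2m a4p a4p5 b4m b4m5 : nat) : seq atom :=
  nseq a2p om2_1 ++ nseq a2m om2_m1 ++
  nseq a4p om4_1 ++ nseq a4p5 om4_5 ++ nseq b4m om4_m1 ++ nseq b4m5 om4_m5.

Lemma model_mkseq a2p a2m a4p a4p5 b4m b4m5 :
  mkseq (fun i => (false, coef2_nat a2p i)) (a2p + a2m) ++
  mkseq (fun j => (true, coef4_nat a4p a4p5 b4m j)) (a4p + a4p5 + b4m + b4m5) =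
  model a2p a2m a4p a4p5 b4m b4m5.
Proof.
rewrite /mkseq !iotaD !map_cat -!catA /model !add0n.
by do !congr (_ ++ _); apply: map_iota_const => i hi;
  rewrite /coef2_nat /coef4_nat; repeat case: ifP => ? //; lia.
Qed.

Lemma eqQZ_coef2 a2p i (t : nat) :
  eqQZ ((atom_val8 (false, coef2_nat a2p i) t)%:R / 8) (coef2 a2p i * t%:R ^+ 2 / 4).
Proof.
rewrite /coef2 /coef2_nat /atom_val8 /=.
by case: ifP => _; [apply: (eqQZ_addn _ _ 0) | apply: (eqQZ_addn _ _ (t * t))];
  rewrite !natrM; field.
Qed.

Lemma eqQZ_coef4 a4p a4p5 b4m j (t : nat) :
  eqQZ ((atom_val8 (true, coef4_nat a4p a4p5 b4m j) t)%:R / 8)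
       (coef4 a4p a4p5 b4m j * t%:R ^+ 2 / 8).
Proof.
rewrite /coef4 /coef4_nat /atom_val8 /=.
do 3?case: ifP => _.
- by apply: (eqQZ_addn _ _ 0); rewrite !natrM; field.
- by apply: (eqQZ_addn _ _ 0); rewrite !natrM; field.
- by apply: (eqQZ_addn _ _ (t * t)); rewrite !natrM; field.
- by apply: (eqQZ_addn _ _ (t * t)); rewrite !natrM; field.
Qed.

Lemma qform_model a2p a2m a4p a4p5 b4m b4m5 :
  isometric (QSpace (@qform a2p a2m a4p a4p5 b4m b4m5))
            (diag_space (model a2p a2m a4p a4p5 b4m b4m5)).
Proof.
rewrite -model_mkseq; apply: isometric_trans (isometric_sym (diag_space_cat _ _)).
apply: isometric_trans (osum_congr (ffun_space_diag false _ (coef2_nat a2p))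
                                   (ffun_space_diag true _ (coef4_nat a4p a4p5 b4m))).
apply: isometric_pointwise => x; apply: eqQZ_add; apply: eqQZ_sum => i.
  exact: eqQZ_coef2.
exact: eqQZ_coef4.
Qed.

Theorem lemma1 (a2p a2m a4p a4p5 b4m b4m5 : nat) :
  T_symmetric (@qform a2p a2m a4p a4p5 b4m b4m5) <->
  ((a2p%:Z - a2m%:Z + a4p%:Z + a4p5%:Z - b4m%:Z - b4m5%:Z) %% 4)%Z = 0.
Proof.
set l := model a2p a2m a4p a4p5 b4m b4m5.
have hl : all (mem (pos_atoms ++ neg_atoms)) l by rewrite !all_cat !all_nseq !orbT.
have e := qform_model a2p a2m a4p a4p5 b4m b4m5.
transitivity (T_symmetric (qval (diag_space l))).
  by split=> h; [exact: (T_symmetric_isometric e h) | exact: (T_symmetric_isometric (isometric_sym e) h)].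
rewrite T_symmetric_diagP // !map_cat !sumn_cat !map_nseq !sumn_nseq /=.
by split=> ?; lia.
Qed.
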